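(* For every $n \in \mathbb{N}$, let $\lambda_n$ be the smallest positive integer such that $\lambda_n P^{(k)} \in E_n$ for every $P \in E_n$ and every $k \in \mathbb{N}$. Then $$\lambda_n = q_n = \prod_{p \text{ prime}} p^{\lfloor n/p \rfloor}.$$
   Context: For $n \in \mathbb{N}$, $E_n$ denotes the set of polynomials $P \in \mathbb{C}[X]$ of degree $\leq n$ (including the zero polynomial) such that $P(\mathbb{Z}) \subset \mathbb{Z}$; $P^{(k)}$ denotes the $k$-th derivative ($P^{(0)} = P$). For $n \in \mathbb{N}$, $$q_n = \mathrm{lcm}\bigl(\{1\}\cup\{i_1 i_2 \cdots i_k : k \in \mathbb{N}^*,\ i_1,\dots,i_k \in \mathbb{N}^*,\ i_1+\dots+i_k \leq n\}\bigr),$$ where $\mathbb{N}^*$ denotes the positive integers. $\lfloor\cdot\rfloor$ is the integer-part function. *)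

From HB Require Import structures.
From mathcomp Require Import all_boot all_order all_algebra.
Set Implicit Arguments. Unset Strict Implicit. Unset Printing Implicit Defensive.
Import Order.TTheory GRing.Theory Num.Theory.
Local Open Scope ring_scope.

(* E_n : polynomials of degree <= n (size <= n+1, including 0) mapping Z into Z. *)
Definition En (C : numClosedFieldType) (n : nat) (P : {poly C}) : Prop :=
  (size P <= n.+1)%N /\ forall z : int, exists m : int, P.[z%:~R] = m%:~R.

Definition admissible (C : numClosedFieldType) (n l : nat) : Prop :=
  forall (P : {poly C}) (k : nat), En n P -> En n (l%:R *: P^`(k)).

Definition qset (n x : nat) : Prop :=
  x = 1%N \/
  exists s : seq nat, s != [::] /\ all (fun i => 0 < i)%N s /\
    (sumn s <= n)%N /\ x = (\prod_(i <- s) i)%N.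

Definition is_lcm_of (S : nat -> Prop) (d : nat) : Prop :=
  (forall x, S x -> (x %| d)%N) /\
  (forall m, (forall x, S x -> (x %| m)%N) -> (d %| m)%N).

From HB Require Import structures.
From mathcomp Require Import all_boot all_order all_algebra.
From mathcomp Require Import zify ring.
Set Implicit Arguments. Unset Strict Implicit. Unset Printing Implicit Defensive.
Import Order.TTheory GRing.Theory Num.Theory.

(* Since v_p(t) <= floor(t/p), we get t q_a | q_(a+t); this gives
   the lcm description of q_n and drives the upper bound.  Integer-valued polynomials of degree <= n are exactly the
   integer combinations of the binomial polynomials binom j = (X choose j),
   j <= n (via the forward difference Delta).  As D = log (1 + Delta),
   binom j' = sum_(k < j) (-1)^(j-k-1)/(j-k) binom k, so the property "the
   coefficient r_i of binom i satisfies q_(n-i) r_i in Z" is stable under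
   differentiation, and it forces q_n P(z) in Z.  For a prime p <= n and m = floor(n/p), the number
   p^m binom (m p)^(m)(0) is congruent to +-1 modulo p Z_(p); evaluating
   l binom (m p)^(m) at 0 therefore shows p^m | l for every admissible l. *)

(** * Valuation estimates *)

Lemma expn_ge_lin p v : (1 < p)%N -> ((p - 1) * v + 1 <= p ^ v)%N.
Proof.
move=> p_gt1; elim: v => [|v IH]; first by rewrite muln0 expn0.
have : (1 <= p ^ v)%N by rewrite expn_gt0; lia.
rewrite expnS; nia.
Qed.

Lemma logn_lin_bound p t : prime p -> (0 < t)%N -> ((p - 1) * logn p t + 1 <= t)%N.
Proof.
move=> p_pr t_gt0; apply: leq_trans (expn_ge_lin (logn p t) (prime_gt1 p_pr)) _.
exact: dvdn_leq t_gt0 (pfactor_dvdnn p t).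
Qed.

(* Legendre-type bound v_p(t) <= floor(t/p): it makes q_n superadditive. *)
Lemma logn_le_divn p t : prime p -> (0 < t)%N -> (logn p t <= t %/ p)%N.
Proof.
move=> p_pr t_gt0; have p_gt1 := prime_gt1 p_pr.
rewrite leq_divRL; last lia.
case Ev: (logn p t) => [//|v].
have : (p ^ v.+1 <= t)%N by rewrite -Ev; exact: dvdn_leq (pfactor_dvdnn p t).
have := expn_ge_lin v p_gt1; rewrite expnS; nia.
Qed.

Lemma logn_lin_bound_gt p s : prime p -> (p < s)%N -> (p + (p - 1) * logn p s <= s)%N.
Proof.
move=> p_pr p_lt_s; have p_gt1 := prime_gt1 p_pr.
have s_gt0 : (0 < s)%N by lia.
have ps_le : (p ^ logn p s <= s)%N by exact: dvdn_leq (pfactor_dvdnn p s).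
case Ev: (logn p s) ps_le => [|[|v]] ps_le; first by rewrite muln0 addn0 ltnW.
- have /dvdnP[w s_eq] : (p %| s)%N by rewrite -(expn1 p) pfactor_dvdn // Ev.
  rewrite s_eq in p_lt_s *.
  have : (1 < w)%N by case: w {s_eq} p_lt_s => [|[|w]]; rewrite ?mul0n ?mul1n ?ltnn.
  nia.
- have := expn_ge_lin v.+1 p_gt1; move: ps_le; rewrite expnS; nia.
Qed.

Lemma leq_divnD a b p : (a %/ p + b %/ p <= (a + b) %/ p)%N.
Proof.
case: p => [|p]; first by rewrite !divn0.
by rewrite (divnD a b (ltn0Sn p)) leq_addr.
Qed.

Definition prime_prod (M : nat) (f : nat -> nat) : nat :=
  (\prod_(p < M | prime p) p ^ f p)%N.

Lemma prime_prod_gt0 M f : (0 < prime_prod M f)%N.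
Proof.
rewrite /prime_prod; elim/big_ind: _ => // [x y|i i_pr].
  by rewrite muln_gt0 => ->.
by rewrite expn_gt0 prime_gt0.
Qed.

Lemma logn_prime_prod q M f : prime q ->
  logn q (prime_prod M f) = if (q < M)%N then f q else 0%N.
Proof.
move=> q_pr; elim: M => [|M IH]; first by rewrite /prime_prod big_ord0 logn1.
rewrite /prime_prod big_mkcond big_ord_recr /= -big_mkcond -/(prime_prod M f).
case: (boolP (prime M)) => M_pr /=.
  rewrite lognM ?prime_prod_gt0 ?expn_gt0 ?prime_gt0 // lognX (logn_prime _ M_pr) IH.
  case: (ltngtP q M) => [q_lt_M|M_lt_q|->].
  - by rewrite muln0 addn0 ltnS ltnW.
  - by rewrite muln0 ltnS leqNgt M_lt_q.
  - by rewrite ltnSn muln1.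
rewrite muln1 IH; case: (ltngtP q M) => [q_lt_M|M_lt_q|q_eq_M].
- by rewrite ltnS ltnW.
- by rewrite ltnS leqNgt M_lt_q.
- by rewrite -q_eq_M q_pr in M_pr.
Qed.

Definition qn (N : nat) : nat := prime_prod N.+1 (fun p => N %/ p)%N.

Lemma qn_gt0 N : (0 < qn N)%N.
Proof. exact: prime_prod_gt0. Qed.

Lemma logn_qn q N : prime q -> logn q (qn N) = (N %/ q)%N.
Proof.
move=> q_pr; rewrite logn_prime_prod //; case: ifP => // /negbT.
by rewrite -leqNgt => N_lt_q; rewrite divn_small.
Qed.

Lemma dvdn_logn d m : (0 < d)%N -> (0 < m)%N ->
  (forall p, prime p -> (logn p d <= logn p m)%N) -> (d %| m)%N.
Proof.
move=> d_gt0 m_gt0 le_logn; apply/dvdn_partP => // p.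
by rewrite mem_primes => /and3P[p_pr _ _]; rewrite p_part pfactor_dvdn // le_logn.
Qed.

Lemma qn_dvdn n m : (0 < m)%N ->
  (forall p, prime p -> (p <= n)%N -> (p ^ (n %/ p) %| m)%N) -> (qn n %| m)%N.
Proof.
move=> m_gt0 pdvd; apply: dvdn_logn; rewrite ?qn_gt0 // => p p_pr.
rewrite logn_qn //; case: (leqP p n) => [p_le_n|n_lt_p].
  by rewrite -pfactor_dvdn // pdvd.
by rewrite divn_small.
Qed.

Lemma dvdn_mul_qn t a : (0 < t)%N -> (t * qn a %| qn (a + t))%N.
Proof.
move=> t_gt0; apply: dvdn_logn; rewrite ?muln_gt0 ?t_gt0 ?qn_gt0 // => q q_pr.
rewrite lognM ?qn_gt0 // !logn_qn //.
have := logn_le_divn q_pr t_gt0; have := leq_divnD a t q; lia.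
Qed.

Lemma qn_dvdn_mono a b : (a <= b)%N -> (qn a %| qn b)%N.
Proof.
move=> a_le_b; have [->//|a_ne_b] := eqVneq a b.
have diff_gt0 : (0 < b - a)%N by lia.
have := dvdn_mul_qn a diff_gt0; rewrite subnKC //.
exact: dvdn_trans (dvdn_mull _ (dvdnn _)).
Qed.

(** * q_n is the lcm of the products i_1 ... i_k with i_1 + ... + i_k <= n *)

Lemma prod_dvdn_qn (s : seq nat) : all (fun i => 0 < i)%N s ->
  (\prod_(i <- s) i %| qn (sumn s))%N.
Proof.
elim: s => [|i s IH] /=; first by rewrite big_nil dvd1n.
case/andP=> i_gt0 s_pos; rewrite big_cons addnC.
exact: dvdn_trans (dvdn_mul (dvdnn i) (IH s_pos)) (dvdn_mul_qn _ i_gt0).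
Qed.

Lemma prod_nseq k p : (\prod_(i <- nseq k p) i = p ^ k)%N.
Proof. by elim: k => [|k IH]; rewrite ?big_nil // /= big_cons IH expnS. Qed.

(* The products p ... p (floor(n/p) times) show that q_n is least. *)
Lemma qn_lcm_qset n : is_lcm_of (qset n) (qn n).
Proof.
split.
  move=> x [->|[s [_ [s_pos [s_le ->]]]]]; first exact: dvd1n.
  exact: dvdn_trans (prod_dvdn_qn s_pos) (qn_dvdn_mono s_le).
move=> m m_mul; have [->|m_gt0] := posnP m; first exact: dvdn0.
apply: qn_dvdn m_gt0 _ => p p_pr p_le_n.
case Ek: (n %/ p)%N => [|k]; first by rewrite expn0 dvd1n.
apply: m_mul; right; exists (nseq k.+1 p); split=> //; split.
  by apply/allP => i /nseqP[-> _]; exact: prime_gt0.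
by rewrite sumn_nseq -Ek mulnC leq_divM prod_nseq.
Qed.

(** * Integer-valued polynomials and the binomial basis *)

Section Polynomials.
Variable R : numFieldType.
Local Open Scope ring_scope.
Implicit Types (x : R) (P : {poly R}).

Definition is_int x : Prop := exists m : int, x = m%:~R.

Lemma is_intD x y : is_int x -> is_int y -> is_int (x + y).
Proof. by move=> [a ->] [b ->]; exists (a + b); rewrite intrD. Qed.

Lemma is_intM x y : is_int x -> is_int y -> is_int (x * y).
Proof. by move=> [a ->] [b ->]; exists (a * b); rewrite intrM. Qed.

Lemma is_intN x : is_int x -> is_int (- x).
Proof. by move=> [a ->]; exists (- a); rewrite mulrNz. Qed.

Lemma is_int_int (m : int) : is_int m%:~R.
Proof. by exists m. Qed.

Lemma is_int_nat (k : nat) : is_int k%:R.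
Proof. by exists k%:Z. Qed.

Lemma is_int_sign k : is_int ((-1) ^+ k).
Proof. by exists ((-1) ^+ k); rewrite rmorphXn /= rmorphN1. Qed.

Lemma natr_neq0 (k : nat) : (0 < k)%N -> (k%:R : R) != 0.
Proof. by rewrite pnatr_eq0 -lt0n. Qed.

Lemma is_int_of_diff (g : int -> R) : is_int (g 0) ->
  (forall z, is_int (g (z + 1) - g z)) -> forall z, is_int (g z).
Proof.
move=> g0_int dg_int; elim/int_rect => [//|k IH|k IH].
  have -> : g k.+1 = g k + (g (k + 1) - g k) by rewrite addrC subrK -addn1.
  exact: is_intD IH (dg_int k).
have -> : g (- k.+1%:Z) = g (- k%:Z) - (g (- k.+1%:Z + 1) - g (- k.+1%:Z)).
  have shift : - k.+1%:Z + 1 = - k%:Z by lia.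
  by rewrite shift opprB addrC subrK.
by apply: is_intD IH (is_intN (dg_int _)).
Qed.

Lemma poly_eq_on_nat P Q : (forall k : nat, P.[k%:R] = Q.[k%:R]) -> P = Q.
Proof.
move=> PQ; apply/eqP; rewrite -subr_eq0; apply/eqP.
apply: (@roots_geq_poly_eq0 _ _ [seq (i%:R : R) | i <- iota 0 (size (P - Q))]).
- by apply/allP => _ /mapP[k _ ->]; rewrite /root !hornerE PQ subrr.
- by rewrite map_inj_uniq ?iota_uniq // => a b /eqP; rewrite eqr_nat => /eqP.
- by rewrite size_map size_iota.
Qed.

Lemma poly_shift_invariant P :
  (forall x, P.[x + 1] = P.[x]) -> P = (P.[0])%:P.
Proof.
move=> P_inv; apply: poly_eq_on_nat => k; rewrite hornerC.
by elim: k => [//|k IH]; rewrite -natr1 P_inv.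
Qed.

(* The binomial polynomial binom j = X (X - 1) ... (X - j + 1) / j!. *)
Fixpoint binom (j : nat) : {poly R} :=
  if j is i.+1 then (i.+1%:R)^-1 *: (binom i * ('X - (i%:R)%:P)) else 1.
Arguments binom : simpl never.

Lemma binomS j : binom j.+1 = (j.+1%:R)^-1 *: (binom j * ('X - (j%:R)%:P)).
Proof. by []. Qed.

Lemma binom0 : binom 0 = 1.
Proof. by []. Qed.

Lemma horner_binom0 x : (binom 0).[x] = 1.
Proof. by rewrite binom0 hornerC. Qed.

Lemma horner_binomS j x :
  (binom j.+1).[x] = (j.+1%:R)^-1 * ((binom j).[x] * (x - j%:R)).
Proof. by rewrite binomS !hornerE. Qed.

Lemma binom_at0 j : (binom j).[0] = (j == 0)%:R.
Proof.
elim: j => [|j IH]; first exact: horner_binom0.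
rewrite horner_binomS; case: j IH => [|j] IH; first by rewrite sub0r oppr0 !mulr0.
by rewrite IH !mul0r mulr0.
Qed.

Lemma binom_pascal j x :
  (binom j.+1).[x + 1] = (binom j.+1).[x] + (binom j).[x].
Proof.
elim: j x => [|j IH] x.
  by rewrite !horner_binomS !horner_binom0 invr1 !mul1r !subr0.
rewrite horner_binomS IH !horner_binomS.
have := natr_neq0 (ltn0Sn j); have := natr_neq0 (ltn0Sn j.+1).
by rewrite -!natr1 => nz2 nz1; field; rewrite nz1 nz2.
Qed.

(* Binomial polynomials are integer-valued, by Pascal's rule. *)
Lemma binom_int j (z : int) : is_int (binom j).[z%:~R].
Proof.
elim: j z => [|j IH] z; first by exists 1; rewrite horner_binom0.
apply: (is_int_of_diff (g := fun z : int => (binom j.+1).[z%:~R])) => [|w].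
  by rewrite binom_at0; exact: is_int_nat.
by rewrite intrD binom_pascal addrC addKr.
Qed.

Lemma size_binom j : (size (binom j) <= j.+1)%N.
Proof.
elim: j => [|j IH]; first by rewrite size_poly1.
apply: leq_trans (size_scale_leq _ _) _.
by apply: leq_trans (size_polyMleq _ _) _; rewrite size_XsubC addn2.
Qed.

Definition delta P : {poly R} := P \Po ('X + 1%:P) - P.

Lemma horner_delta P x : (delta P).[x] = P.[x + 1] - P.[x].
Proof. by rewrite /delta hornerD hornerN horner_comp !hornerE. Qed.

Lemma size_delta P : (size (delta P) <= (size P).-1)%N.
Proof.
have [->|P_nz] := eqVneq P 0; first by rewrite /delta comp_poly0 subrr size_poly0.
have size_P : (0 < size P)%N by rewrite size_poly_gt0.
have size_comp : size (P \Po ('X + 1%:P)) = size P by rewrite size_comp_poly2 ?size_XaddC.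
apply/leq_sizeP => i; rewrite leq_eqVlt => /orP[/eqP <-|lt_i].
  rewrite coefB -{1}size_comp -!lead_coefE lead_coef_comp ?size_XaddC //.
  by rewrite lead_coefXaddC expr1n mulr1 subrr.
by rewrite coefB !nth_default ?subrr ?size_comp //; move: lt_i; case: (size P) size_P.
Qed.

Lemma antidelta_binom n P (c : nat -> R) :
  delta P = \sum_(i < n) c i *: binom i ->
  P = (P.[0])%:P + \sum_(i < n) c i *: binom i.+1.
Proof.
move=> dP; set S := \sum_(i < n) _.
have S_diff x : S.[x + 1] - S.[x] = P.[x + 1] - P.[x].
  rewrite -[RHS]horner_delta dP !horner_sum -sumrB; apply: eq_bigr => i _.
  by rewrite !(hornerZ (c i)) binom_pascal mulrDr addrAC subrr add0r.
have /poly_shift_invariant PS_const : forall x, (P - S).[x + 1] = (P - S).[x].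
  by move=> x; rewrite !hornerE -(subrK S.[x] S.[x + 1]) S_diff; ring.
have S0 : S.[0] = 0.
  by rewrite horner_sum big1 // => i _; rewrite hornerZ binom_at0 mulr0.
by rewrite -{1}(subrK S P) PS_const hornerD hornerN S0 subr0.
Qed.

Lemma binomial_expansion n P : (size P <= n.+1)%N ->
  (forall z : int, is_int P.[z%:~R]) ->
  exists c : nat -> int, P = \sum_(j < n.+1) (c j)%:~R *: binom j.
Proof.
elim: n P => [|n IH] P size_P P_int.
  have [m m_eq] := P_int 0.
  exists (fun _ => m); rewrite big_ord1 binom0 -mul_polyC mulr1 -m_eq mulr0z.
  by rewrite horner_coef0 -size1_polyC.
have [c dP] : exists c : nat -> int,
    delta P = \sum_(j < n.+1) (c j)%:~R *: binom j.
  apply: IH => [|z]; first by apply: leq_trans (size_delta P) _; lia.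
  rewrite horner_delta; have -> : z%:~R + 1 = (z + 1)%:~R :> R by rewrite intrD.
  by apply: is_intD (P_int _) (is_intN (P_int _)).
have [m m_eq] := P_int 0.
exists (fun j => if j is i.+1 then c i else m).
rewrite big_ord_recl /= binom0 -mul_polyC mulr1 -m_eq mulr0z.
rewrite {1}(antidelta_binom (c := fun j => (c j)%:~R) dP).
by congr (_ + _); apply: eq_bigr => i _; rewrite /bump leq0n add1n.
Qed.

(** * Derivatives of the binomial polynomials *)

(* logc t = (-1)^(t-1) / t, the coefficients of log (1 + x): since
   Delta = exp D - 1 we have D = log (1 + Delta). *)
Definition logc (t : nat) : R := (-1) ^+ t.-1 / t%:R.

Lemma mul_logc t : t.+1%:R * logc t.+1 = (-1) ^+ t.
Proof. by rewrite /logc mulrCA divff ?mulr1 // natr_neq0. Qed.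

Lemma is_int_mul_logc t : is_int (t%:R * logc t).
Proof.
by case: t => [|t]; rewrite ?mul0r ?mul_logc; [exact: is_int_nat 0 | exact: is_int_sign].
Qed.

Lemma binom_shift j : binom j.+1 \Po ('X + 1%:P) = binom j.+1 + binom j.
Proof.
apply: poly_eq_on_nat => k.
by rewrite horner_comp (hornerD 'X) hornerX hornerC (hornerD (binom j.+1)) binom_pascal.
Qed.

Lemma delta_deriv P : delta P^`() = (delta P)^`().
Proof. by rewrite /delta derivB deriv_comp derivD derivX derivC addr0 mulr1. Qed.

Lemma delta_binom j : delta (binom j.+1) = binom j.
Proof. by rewrite /delta binom_shift addrC addKr. Qed.

Lemma deriv_binom_at0 j : ((binom j.+1)^`()).[0] = logc j.+1.
Proof.
elim: j => [|j IH].
  rewrite binomS derivZ derivM derivXsubC binom0 -polyC1 derivC mul0r add0r mulr1.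
  by rewrite hornerZ hornerC /logc expr0 mul1r mulr1.
rewrite binomS derivZ derivM derivXsubC mulr1 hornerZ hornerD hornerM IH binom_at0.
rewrite hornerXsubC sub0r /= addr0 /logc /= exprS.
have := natr_neq0 (ltn0Sn j); have := natr_neq0 (ltn0Sn j.+1).
by rewrite -!natr1 => nz2 nz1; field; rewrite nz1 nz2.
Qed.

Lemma deriv_binom j : (binom j)^`() = \sum_(k < j) logc (j - k) *: binom k.
Proof.
elim: j => [|j IH]; first by rewrite binom0 -polyC1 derivC big_ord0.
have dD : delta (binom j.+1)^`() = \sum_(k < j) logc (j - k) *: binom k.
  by rewrite delta_deriv delta_binom IH.
rewrite {1}(antidelta_binom (c := fun k => logc (j - k)) dD) deriv_binom_at0.
rewrite big_ord_recl /= binom0 subn0 -alg_polyC.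
by congr (_ + _); apply: eq_bigr => k _; rewrite /bump leq0n add1n subSS.
Qed.

(** * The upper bound: q_n P^(k) is integer-valued *)

Lemma size_derivn_le P k : (size P^`(k) <= size P)%N.
Proof.
apply/leq_sizeP => i le_i; rewrite coef_derivn nth_default ?mul0rn //.
exact: leq_trans le_i (leq_addl _ _).
Qed.


(* P = sum_(i <= n) r_i binom i with q_(n - i) r_i integral for each i; this
   property is stable under differentiation. *)
Definition qn_bounded n P : Prop := exists r : nat -> R,
  P = \sum_(i < n.+1) r i *: binom i /\
  forall i, (i <= n)%N -> is_int ((qn (n - i))%:R * r i).

Lemma qn_bounded0 n : qn_bounded n 0.
Proof.
exists (fun _ => 0); split=> [|i _]; last by rewrite mulr0; exact: is_int_nat 0.
by rewrite big1 // => i _; rewrite scale0r.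
Qed.

Lemma qn_boundedD n P Q : qn_bounded n P -> qn_bounded n Q -> qn_bounded n (P + Q).
Proof.
move=> [r [-> r_int]] [s [-> s_int]]; exists (fun i => r i + s i); split.
  by rewrite -big_split; apply: eq_bigr => i _; rewrite scalerDl.
by move=> i le_i; rewrite mulrDr; apply: is_intD (r_int _ le_i) (s_int _ le_i).
Qed.

Lemma qn_bounded_sum n (I : finType) (F : I -> {poly R}) :
  (forall i, qn_bounded n (F i)) -> qn_bounded n (\sum_i F i).
Proof.
by move=> F_bnd; elim/big_ind: _ => //; [exact: qn_bounded0 | exact: qn_boundedD].
Qed.

Lemma qn_bounded_binom n i c : (i <= n)%N -> is_int ((qn (n - i))%:R * c) ->
  qn_bounded n (c *: binom i).
Proof.
move=> le_i c_int; exists (fun k => if k == i then c else 0); split=> [|k _].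
  rewrite (bigD1 (Ordinal (le_i : (i < n.+1)%N))) //= eqxx big1 ?addr0 // => k.
  by rewrite -val_eqE /= => /negbTE ->; rewrite scale0r.
by case: eqP => [->//|_]; rewrite mulr0; exact: is_int_nat 0.
Qed.

(* Stability under differentiation: the coefficient of binom k in
   (r_i binom i)' is r_i logc (i - k), and t logc t = +-1 while
   t q_(n-i) | q_(n-i+t). *)
Lemma qn_bounded_deriv n P : qn_bounded n P -> qn_bounded n P^`().
Proof.
move=> [r [-> r_int]]; rewrite raddf_sum /=; apply: qn_bounded_sum => i.
rewrite derivZ deriv_binom scaler_sumr; apply: qn_bounded_sum => k.
have k_lt_i : (k < i)%N := ltn_ord k.
have i_le_n : (i <= n)%N by rewrite -ltnS.
rewrite scalerA; apply: qn_bounded_binom; first lia.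
have step_gt0 : (0 < i - k)%N by rewrite subn_gt0.
have /dvdnP[w qn_eq] := dvdn_mul_qn (n - i) step_gt0.
have -> : (n - k = n - i + (i - k))%N by lia.
rewrite qn_eq !natrM.
have -> : w%:R * ((i - k)%:R * (qn (n - i))%:R) * (r i * logc (i - k)) =
          w%:R * ((i - k)%:R * logc (i - k)) * ((qn (n - i))%:R * r i) by ring.
exact: is_intM (is_intM (is_int_nat w) (is_int_mul_logc _)) (r_int i i_le_n).
Qed.

Lemma qn_bounded_derivn n P k : qn_bounded n P -> qn_bounded n P^`(k).
Proof.
move=> P_bnd; elim: k => [|k IH]; first by rewrite derivn0.
by rewrite derivnS; exact: qn_bounded_deriv.
Qed.

Lemma qn_bounded_int n P (z : int) : qn_bounded n P -> is_int ((qn n)%:R * P.[z%:~R]).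
Proof.
move=> [r [-> r_int]]; rewrite horner_sum mulr_sumr.
elim/big_ind: _ => [|x y|i _]; [exact: is_int_nat 0 | exact: is_intD |].
have i_le_n : (i <= n)%N by rewrite -ltnS.
have /dvdnP[w ->] := qn_dvdn_mono (leq_subr i n).
rewrite (hornerZ (r i)) natrM.
have -> : w%:R * (qn (n - i))%:R * (r i * (binom i).[z%:~R]) =
          w%:R * ((qn (n - i))%:R * r i) * (binom i).[z%:~R] by ring.
exact: is_intM (is_intM (is_int_nat w) (r_int i i_le_n)) (binom_int i z).
Qed.

Lemma int_valued_qn_bounded n P : (size P <= n.+1)%N ->
  (forall z : int, is_int P.[z%:~R]) -> qn_bounded n P.
Proof.
move=> size_P P_int; have [c ->] := binomial_expansion size_P P_int.
apply: qn_bounded_sum => j; apply: qn_bounded_binom; first by rewrite -ltnS.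
exact: is_intM (is_int_nat _) (is_int_int _).
Qed.

(* der0 j k = binom j^(k)(0); the lower bound rests on its p-adic size. *)
Definition der0 (j k : nat) : R := ((binom j)^`(k)).[0].

Lemma der0_0 j : der0 j 0 = (j == 0)%:R.
Proof. by rewrite /der0 derivn0 binom_at0. Qed.

Lemma der0S j k : der0 j k.+1 = \sum_(t < j) logc t.+1 * der0 (j - t.+1) k.
Proof.
rewrite /der0 derivSn deriv_binom raddf_sum /= horner_sum (reindex_inj rev_ord_inj) /=.
apply: eq_bigr => t _; rewrite derivnZ (hornerZ (logc _)).
by rewrite subKn ?ltn_ord.
Qed.

Lemma der0_lt j k : (j < k)%N -> der0 j k = 0.
Proof.
elim: k j => [//|k IH] j j_lt_k.
by rewrite der0S big1 // => t _; rewrite IH ?mulr0 //; have := ltn_ord t; lia.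
Qed.

(** * p-integral numbers *)

(* x is p-integral (lies in Z_(p)): x b is an integer for some b prime to p. *)
Definition p_integral (p : nat) x : Prop :=
  exists (u : int) (b : nat), ~~ (p %| b)%N /\ x * b%:R = u%:~R.

Section PIntegral.
Variable p : nat.
Hypothesis p_pr : prime p.

Lemma p_integral_int x : is_int x -> p_integral p x.
Proof.
move=> [m ->]; exists m, 1%N; split; last by rewrite mulr1.
by rewrite dvdn1 neq_ltn (prime_gt1 p_pr) orbT.
Qed.

Lemma p_integral_nat (k : nat) : p_integral p k%:R.
Proof. exact/p_integral_int/is_int_nat. Qed.

Lemma p_integralD x y : p_integral p x -> p_integral p y -> p_integral p (x + y).
Proof.
move=> [u [b [b_coprime xb]]] [w [c [c_coprime yc]]].
exists (u * c%:Z + w * b%:Z), (b * c)%N; split.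
  by rewrite Euclid_dvdM // negb_or b_coprime c_coprime.
by rewrite intrD !intrM -xb -yc natrM /=; ring.
Qed.

Lemma p_integralM x y : p_integral p x -> p_integral p y -> p_integral p (x * y).
Proof.
move=> [u [b [b_coprime xb]]] [w [c [c_coprime yc]]].
exists (u * w), (b * c)%N; split.
  by rewrite Euclid_dvdM // negb_or b_coprime c_coprime.
by rewrite intrM -xb -yc natrM; ring.
Qed.

Lemma p_integral_sum n (P : pred 'I_n) (F : 'I_n -> R) :
  (forall i, P i -> p_integral p (F i)) -> p_integral p (\sum_(i | P i) F i).
Proof.
by move=> F_int; elim/big_ind: _ => //; [exact: p_integral_nat 0 | exact: p_integralD].
Qed.

(* p^(v_p(t)) logc t is p-integral: only the p-part of t is a problem. *)
Lemma p_integral_logc t : (0 < t)%N -> p_integral p (p%:R ^+ logn p t * logc t).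
Proof.
move=> t_gt0; have [u u_coprime t_eq] := pfactor_coprime p_pr t_gt0.
exists ((-1) ^+ t.-1), u; split; first by rewrite -prime_coprime.
have pv_nz : (p%:R ^+ logn p t : R) != 0 by rewrite expf_neq0 // natr_neq0 ?prime_gt0.
have -> : (u%:R : R) = t%:R / p%:R ^+ logn p t.
  by rewrite {1}t_eq natrM natrX mulfK.
rewrite /logc rmorphXn /= rmorphN1.
by field; rewrite pv_nz natr_neq0.
Qed.

Lemma p_integral_scaled_nat e (k : nat) : p_integral p (p%:R ^+ e * k%:R).
Proof. by rewrite -natrX -natrM; exact: p_integral_nat. Qed.

Lemma p_integral_mulX e v w x y : (v + w <= e)%N ->
  p_integral p (p%:R ^+ v * x) -> p_integral p (p%:R ^+ w * y) ->
  p_integral p (p%:R ^+ e * (x * y)).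
Proof.
move=> le_e x_int y_int; rewrite -(subnK le_e) exprD.
have -> : p%:R ^+ (e - (v + w)) * p%:R ^+ (v + w) * (x * y) =
          p%:R ^+ (e - (v + w)) * ((p%:R ^+ v * x) * (p%:R ^+ w * y)) :> R.
  by rewrite exprD; ring.
apply: (p_integralM _ (p_integralM x_int y_int)).
by rewrite -natrX; exact: p_integral_nat.
Qed.

Lemma p_integral_der0_floor k j : p_integral p (p%:R ^+ (j %/ p) * der0 j k).
Proof.
elim: k j => [|k IH] j; first by rewrite der0_0; exact: p_integral_scaled_nat.
rewrite der0S mulr_sumr; apply: p_integral_sum => t _.
have t_lt_j : (t < j)%N := ltn_ord t.
apply: (p_integral_mulX _ (p_integral_logc (ltn0Sn t)) (IH _)).
have := logn_le_divn p_pr (ltn0Sn t); have := leq_divnD t.+1 (j - t.+1) p.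
by rewrite subnKC //; lia.
Qed.

Lemma p_integral_der0_lin k j e : (j <= (p - 1) * e + k)%N ->
  p_integral p (p%:R ^+ e * der0 j k).
Proof.
have p_gt1 := prime_gt1 p_pr.
elim: k j e => [|k IH] j e j_le; first by rewrite der0_0; exact: p_integral_scaled_nat.
rewrite der0S mulr_sumr; apply: p_integral_sum => t _.
have t_lt_j : (t < j)%N := ltn_ord t.
have [small|large] := ltnP (j - t.+1) k.
  by rewrite der0_lt // !mulr0; exact: p_integral_nat 0.
have v_bound := logn_lin_bound p_pr (ltn0Sn t).
have v_le_e : (logn p t.+1 <= e)%N.
  by rewrite -(leq_pmul2l (_ : 0 < p - 1)%N); lia.
apply: (p_integral_mulX _ (p_integral_logc (ltn0Sn t)) (IH _ (e - logn p t.+1)%N _)).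
  by rewrite subnKC.
by rewrite mulnBr; lia.
Qed.

(* In the recursion for binom ((k + 1) p)^(k + 1)(0), every term except the one
   with t + 1 = p becomes p-integral after multiplication by p^k. *)
Lemma p_integral_der0_term k t : t.+1 != p -> (t < k.+1 * p)%N ->
  p_integral p (p%:R ^+ k * (logc t.+1 * der0 (k.+1 * p - t.+1) k)).
Proof.
move=> t_ne_p t_lt; have p_gt1 := prime_gt1 p_pr.
case: (ltngtP t.+1 p) t_ne_p => // [small|large] _.
  have v0 : logn p t.+1 = 0%N.
    apply: logn_coprime; rewrite prime_coprime //.
    by apply/negP => /(dvdn_leq (ltn0Sn _)); lia.
  have floor_k : ((k.+1 * p - t.+1) %/ p = k)%N.
    have -> : (k.+1 * p - t.+1 = (p - t.+1) + k * p)%N by rewrite mulSn; lia.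
    by rewrite divnDMl ?prime_gt0 // divn_small ?add0n //; lia.
  apply: (p_integral_mulX _ (p_integral_logc (ltn0Sn t)) (p_integral_der0_floor k _)).
  by rewrite v0 floor_k.
have [small_j|large_j] := ltnP (k.+1 * p - t.+1) k.
  by rewrite der0_lt // !mulr0; exact: p_integral_nat 0.
have v_bound := logn_lin_bound_gt p_pr large.
have v_le_k : (logn p t.+1 <= k)%N.
  rewrite -(leq_pmul2l (_ : 0 < p - 1)%N); last lia.
  by move: large_j t_lt v_bound; rewrite mulSn; nia.
apply: (p_integral_mulX _ (p_integral_logc (ltn0Sn t))
          (p_integral_der0_lin (e := (k - logn p t.+1)%N) _)).
  by rewrite subnKC.
by rewrite mulnBr; move: large_j t_lt v_bound; rewrite mulSn; nia.
Qed.

Lemma der0_multiple_p k : exists2 y, p_integral p y &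
  p%:R ^+ k * der0 (k * p) k = ((-1) ^+ p.-1) ^+ k + p%:R * y.
Proof.
have p_gt0 := prime_gt0 p_pr.
elim: k => [|k [y y_int y_eq]].
  exists 0; first exact: p_integral_nat 0.
  by rewrite mul0n der0_0 mulr0 addr0 !expr0 mul1r.
have pm1_lt : (p.-1 < k.+1 * p)%N by rewrite mulSn; lia.
rewrite der0S (bigD1 (Ordinal pm1_lt)) //= prednK //.
rewrite (_ : k.+1 * p - p = k * p)%N; last by rewrite mulSn addKn.
set S := \sum_(t < _ | _) _.
exists ((-1) ^+ p.-1 * y + p%:R ^+ k * S).
  apply: (p_integralD (p_integralM (p_integral_int (is_int_sign _)) y_int)).
  rewrite /S mulr_sumr; apply: p_integral_sum => t t_ne.
  apply: p_integral_der0_term (ltn_ord t).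
  by apply: contra t_ne => /eqP t_eq; apply/eqP/val_inj => /=; lia.
have -> : p%:R ^+ k.+1 * (logc p * der0 (k * p) k + S) =
  (p%:R * logc p) * (p%:R ^+ k * der0 (k * p) k) + p%:R * (p%:R ^+ k * S).
  by rewrite exprS; ring.
have p_logc := mul_logc p.-1; rewrite prednK // in p_logc.
by rewrite p_logc y_eq exprS; ring.
Qed.

(* If l x is an integer while p^m x = +-1 + p y with y p-integral, then p^m
   divides l: otherwise clearing denominators would make p divide a number
   prime to p. *)
Lemma pfactor_dvdn_of_unit s l m x y : (0 < l)%N ->
  is_int (l%:R * x) -> p_integral p y ->
  p%:R ^+ m * x = (-1) ^+ s + p%:R * y -> (p ^ m %| l)%N.
Proof.
move=> l_gt0 [M lx] [u [b [b_coprime yb]]] x_eq.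
rewrite pfactor_dvdn //; apply/negPn/negP; rewrite -ltnNge => v_lt_m.
have [l' l'_coprime l_eq] := pfactor_coprime p_pr l_gt0.
set v := logn p l in v_lt_m l_eq.
set W : int := (p%:Z ^+ (m - v).-1 * M * b%:Z - l'%:Z * u)%R.
have cleared : (l'%:Z * ((-1) ^+ s * b%:Z) = p%:Z * W)%R.
  apply: (@intr_inj R).
  rewrite /W !(intrM, intrB, rmorphXn) /= rmorphN1 -!pmulrn -yb -lx l_eq natrM natrX.
  have pm_eq : (p%:R : R) ^+ m = p%:R ^+ (m - v).-1 * p%:R * p%:R ^+ v.
    by rewrite -exprSr prednK ?subn_gt0 // -exprD subnK // ltnW.
  have -> : (-1) ^+ s = p%:R ^+ (m - v).-1 * p%:R * p%:R ^+ v * x - p%:R * y :> R.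
    by rewrite -pm_eq x_eq addrK.
  ring.
have : (p %| l' * b)%N.
  apply/dvdnP; exists `|W|%N.
  have := congr1 absz cleared; rewrite !abszM abszX abszN1 exp1n mul1n !absz_nat.
  by move=> ->; rewrite mulnC.
have l'_ndvd : ~~ (p %| l')%N by rewrite -prime_coprime.
by rewrite Euclid_dvdM // (negbTE l'_ndvd) (negbTE b_coprime).
Qed.

End PIntegral.

End Polynomials.

Lemma admissible_qn (C : numClosedFieldType) n : admissible C n (qn n).
Proof.
move=> P k [size_P P_int]; split.
  exact: leq_trans (size_scale_leq _ _) (leq_trans (size_derivn_le _ _) size_P).
move=> z; rewrite (hornerZ (qn n)%:R).
exact: qn_bounded_int (qn_bounded_derivn k (int_valued_qn_bounded size_P P_int)).
Qed.

(* Minimality: for p <= n prime, testing P = binom (floor(n/p) p) with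
   k = floor(n/p) forces p^floor(n/p) to divide any admissible l. *)
Lemma admissible_pfactor_dvdn (C : numClosedFieldType) n l p :
  prime p -> (p <= n)%N -> (0 < l)%N -> admissible C n l -> (p ^ (n %/ p) %| l)%N.
Proof.
move=> p_pr p_le_n l_gt0 adm; set m := (n %/ p)%N.
have binom_En : En n (binom C (m * p)).
  split; last by move=> z; exact: binom_int.
  by apply: leq_trans (size_binom _ _) _; rewrite ltnS leq_divM.
have [_ /(_ 0) lx_int] := adm _ m binom_En.
have [y y_int y_eq] := der0_multiple_p C p_pr m.
apply: (pfactor_dvdn_of_unit (x := der0 C (m * p) m) p_pr l_gt0 _ y_int).
  by rewrite mulr0z (hornerZ l%:R) in lx_int.
by rewrite y_eq -exprM.
Qed.

Theorem theorem4 (C : numClosedFieldType) (n : nat) :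
  let Q := (\prod_(p < n.+1 | prime p) p ^ (n %/ p))%N in
  [/\ (0 < Q)%N, admissible C n Q,
      (forall l : nat, (0 < l)%N -> admissible C n l -> (Q <= l)%N)
    & is_lcm_of (qset n) Q].
Proof.
move=> Q; have -> : Q = qn n by [].
split; [exact: qn_gt0 | exact: admissible_qn | | exact: qn_lcm_qset].
move=> l l_gt0 adm; apply: (dvdn_leq l_gt0).
apply: (qn_dvdn l_gt0) => p p_pr p_le_n.
exact: admissible_pfactor_dvdn p_pr p_le_n l_gt0 adm.
Qed.
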